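(* Let $n,m$ be positive integers and $\mathbf a=(a_1,\dots,a_n),\mathbf b=(b_1,\dots,b_n)\in\mathbb N^n$. Let $b_{n+1}=\sum_{i=1}^n(a_i-b_i)$, $\mathbf a'=(a_1-b_1,a_2,\dots,a_n,0)$ and $\mathbf b'=(0,b_2,\dots,b_n,b_{n+1})$. Then $\mathcal F_{G(n,m)}(\mathbf a,\mathbf b)$ is integrally equivalent to $\mathcal F_{H(n,m)}(\mathbf a',\mathbf b')$.
   Context: $G(n,m)$ has vertex set $\{(i,j):1\le i\le n,0\le j\le m\}\cup\{s\}$ and edges $((i,j),(i,j+1))$ ($1\le i\le n$, $0\le j\le m-1$), $((i,j),(i+1,j))$ ($1\le i\le n-1$, $0\le j\le m$), $((n,j),s)$ ($0\le j\le m$); $\mathcal F_{G(n,m)}(\mathbf a,\mathbf b)$ is the set of nonnegative real edge weightings with outflow minus inflow $a_i$ at $(i,0)$, $-b_i$ at $(i,m)$, $-\sum a_i+\sum b_i$ at $s$, $0$ elsewhere. $H(n,m)$ is the directed grid graph with vertex set $\{(i,j):1\le i\le n+1,0\le j\le m\}$ and edges $((i,j),(i,j+1))$ ($1\le i\le n+1$, $0\le j\le m-1$) and $((i,j),(i+1,j))$ ($1\le i\le n$, $0\le j\le m$). For $\mathbf a'=(a'_1,\dots,a'_{n+1})$, $\mathbf b'=(b'_1,\dots,b'_{n+1})$ with equal sums, $\mathcal F_{H(n,m)}(\mathbf a',\mathbf b')$ is the set of nonnegative real edge weightings with outflow minus inflow $a'_i$ at $(i,0)$, $-b'_i$ at $(i,m)$,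 and $0$ elsewhere. Integral equivalence: an affine map restricting to a bijection between the polytopes that preserves the lattice. *)

From HB Require Import structures.
From mathcomp Require Import all_boot all_order all_algebra.
From mathcomp Require Import all_classical all_reals.
Set Implicit Arguments. Unset Strict Implicit. Unset Printing Implicit Defensive.
Import Order.TTheory GRing.Theory Num.Theory.
Local Open Scope ring_scope.

Section Generic.
Variable R : realType.

Definition affine_map (E1 E2 : finType) (A : E2 -> E1 -> R) (c : E2 -> R)
  (x : {ffun E1 -> R}) : {ffun E2 -> R} :=
  [ffun e2 => c e2 + \sum_(e1 : E1) A e2 e1 * x e1].

Definition bij_between (T1 T2 : Type) (P : T1 -> Prop) (Q : T2 -> Prop)
  (f : T1 -> T2) : Prop :=
  [/\ (forall x, P x -> Q (f x)),
      (forall x y, P x -> P y -> f x = f y -> x = y) &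
      (forall y, Q y -> exists x, P x /\ f x = y)].

Definition aff_hull (E : finType) (P : {ffun E -> R} -> Prop)
  (x : {ffun E -> R}) : Prop :=
  exists (k : nat) (p : 'I_k -> {ffun E -> R}) (l : 'I_k -> R),
    [/\ (forall i, P (p i)), \sum_(i < k) l i = 1 &
        x = [ffun e => \sum_(i < k) l i * p i e]].

Definition lattice_pt (E : finType) (x : {ffun E -> R}) : Prop :=
  exists z : E -> int, forall e, x e = (z e)%:~R.

Definition integrally_equivalent (E1 E2 : finType)
  (P : {ffun E1 -> R} -> Prop) (Q : {ffun E2 -> R} -> Prop) : Prop :=
  exists (A : E2 -> E1 -> R) (c : E2 -> R),
    bij_between P Q (affine_map A c) /\
    bij_between (fun x => aff_hull P x /\ lattice_pt x)
                (fun y => aff_hull Q y /\ lattice_pt y) (affine_map A c).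

Definition flow_polytope (V E : finType) (src tgt : E -> V) (d : V -> R)
  (x : {ffun E -> R}) : Prop :=
  (forall e, 0 <= x e) /\
  forall v, \sum_(e | src e == v) x e - \sum_(e | tgt e == v) x e = d v.
End Generic.

(* vertex Some (i,j) stands for (i+1, j) (1 <= i+1 <= n, 0 <= j <= m);
   None stands for the sink s *)
Definition VG (n m : nat) : finType := option ('I_n * 'I_m.+1).

Definition adjG (n m : nat) (u v : VG n m) : bool :=
  match u, v with
  | Some (i, j), Some (i', j') =>
      ((i == i' :> nat) && (j.+1 == j' :> nat)) ||
      ((i.+1 == i' :> nat) && (j == j' :> nat))
  | Some (i, j), None => i.+1 == n
  | _, _ => false
  end.

Definition EG (n m : nat) : finType := {p : VG n m * VG n m | adjG p.1 p.2}.
Definition srcG n m (e : EG n m) : VG n m := (val e).1.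
Definition tgtG n m (e : EG n m) : VG n m := (val e).2.

Definition demandG (R : realType) (n m : nat) (a b : 'I_n -> nat)
  (v : VG n m) : R :=
  match v with
  | Some (i, j) => if (j == 0%N :> nat) then (a i)%:R
                   else if (j == m :> nat) then - (b i)%:R else 0
  | None => - (\sum_(i < n) (a i)%:R) + \sum_(i < n) (b i)%:R
  end.

Definition FG (R : realType) (n m : nat) (a b : 'I_n -> nat) :=
  @flow_polytope R (VG n m) (EG n m) (@srcG n m) (@tgtG n m) (demandG R a b).

(* vertex (i,j) stands for (i+1, j) (1 <= i+1 <= n+1, 0 <= j <= m) *)
Definition VH (n m : nat) : finType := ('I_n.+1 * 'I_m.+1)%type.

Definition adjH (n m : nat) (u v : VH n m) : bool :=
  ((u.1 == v.1 :> nat) && (u.2.+1 == v.2 :> nat)) ||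
  ((u.1.+1 == v.1 :> nat) && (u.2 == v.2 :> nat)).

Definition EH (n m : nat) : finType := {p : VH n m * VH n m | adjH p.1 p.2}.
Definition srcH n m (e : EH n m) : VH n m := (val e).1.
Definition tgtH n m (e : EH n m) : VH n m := (val e).2.

Definition demandH (R : realType) (n m : nat) (a' b' : 'I_n.+1 -> int)
  (v : VH n m) : R :=
  if (v.2 == 0%N :> nat) then (a' v.1)%:~R
  else if (v.2 == m :> nat) then - (b' v.1)%:~R else 0.

Definition FH (R : realType) (n m : nat) (a' b' : 'I_n.+1 -> int) :=
  @flow_polytope R (VH n m) (EH n m) (@srcH n m) (@tgtH n m) (demandH R a' b').

(* entry number k (0-based) of a vector 'I_n -> nat, 0 out of range *)
Definition entry (n : nat) (f : 'I_n -> nat) (k : nat) : nat :=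
  if insub k is Some i then f i else 0%N.

(* a' = (a_1 - b_1, a_2, ..., a_n, 0)   (0-based index k) *)
Definition a_prime (n : nat) (a b : 'I_n -> nat) (k : 'I_n.+1) : int :=
  if (k == 0%N :> nat) then (entry a 0)%:Z - (entry b 0)%:Z
  else if (k < n)%N then (entry a k)%:Z else 0.

(* b' = (0, b_2, ..., b_n, b_{n+1}),  b_{n+1} = sum_i (a_i - b_i) *)
Definition b_prime (n : nat) (a b : 'I_n -> nat) (k : 'I_n.+1) : int :=
  if (k == 0%N :> nat) then 0
  else if (k < n)%N then (entry b k)%:Z
  else \sum_(i < n) ((a i)%:Z - (b i)%:Z).

From mathcomp Require Import all_boot all_order all_algebra.
From mathcomp Require Import all_classical all_reals.
From mathcomp Require Import zify lra.
Set Implicit Arguments. Unset Strict Implicit. Unset Printing Implicit Defensive.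
Import Order.TTheory GRing.Theory Num.Theory.
Local Open Scope ring_scope.

(* G(n,m) is H(n,m) with its last row contracted to the sink s: the sink edge
   (n,j) -> s becomes the vertical edge (n,j) -> (n+1,j), and H has in addition
   the horizontal edges of its last row.  A flow x on G is sent to the flow on H
   that agrees with x on the common edges, except that b_1 is subtracted on the
   horizontal edges of the first row, and whose last-row edge entering column j
   carries the total flow that x sends into s from the columns before j.
   Conservation in G makes the horizontal flow along the first row
   non-increasing and at least b_1 at its end, so the image is nonnegative;
   conservation in H forces the flow on the last row to be these partial sums,
   so forgetting the last row and adding b_1 back inverts the map on F_H.  Both
   maps are affine with integral coefficients. *)

Section IntegralEquivalence.
Variable R : realType.

Lemma lattice_ptP (E : finType) (x : {ffun E -> R}) :
  lattice_pt x <-> forall e, x e \is a Num.int.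
Proof.
split=> [[z xE] e|x_int]; first by rewrite xE rpred_int.
by exists (fun e => Num.floor (x e)) => e; apply/esym/eqP; rewrite -intrEfloor.
Qed.

Lemma lattice_pt_affine_map (E1 E2 : finType) (A : E2 -> E1 -> R) (c : E2 -> R)
    (x : {ffun E1 -> R}) :
  (forall e2 e1, A e2 e1 \is a Num.int) -> (forall e2, c e2 \is a Num.int) ->
  lattice_pt x -> lattice_pt (affine_map A c x).
Proof.
move=> A_int c_int /lattice_ptP x_int; apply/lattice_ptP => e2.
by rewrite ffunE rpredD ?rpred_sum // => e1 _; rewrite rpredM.
Qed.

Lemma affine_map_comb (E1 E2 : finType) (A : E2 -> E1 -> R) (c : E2 -> R)
    k (p : 'I_k -> {ffun E1 -> R}) (l : 'I_k -> R) :
  \sum_(i < k) l i = 1 ->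
  affine_map A c [ffun e => \sum_(i < k) l i * p i e] =
  [ffun e2 => \sum_(i < k) l i * affine_map A c (p i) e2].
Proof.
move=> l_sum1; apply/ffunP => e2; rewrite !ffunE.
under [RHS]eq_bigr => i _ do rewrite ffunE mulrDr.
rewrite big_split /= -mulr_suml l_sum1 mul1r; congr (_ + _).
under eq_bigr => e1 _ do rewrite ffunE mulr_sumr.
rewrite exchange_big /=; apply: eq_bigr => i _.
by rewrite mulr_sumr; apply: eq_bigr => e1 _; rewrite mulrCA.
Qed.

Lemma aff_hull_affine_map (E1 E2 : finType) (P : {ffun E1 -> R} -> Prop)
    (Q : {ffun E2 -> R} -> Prop) A c x :
  (forall x, P x -> Q (affine_map A c x)) ->
  aff_hull P x -> aff_hull Q (affine_map A c x).
Proof.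
move=> PQ [k [p [l [Pp l_sum1 ->]]]].
exists k, (fun i => affine_map A c (p i)), l.
by split=> // [i|]; [apply: PQ | apply: affine_map_comb].
Qed.

(* Both maps have integral coefficients, so the lattice points correspond
   as well; [g] is inverse to [f] on the affine hull of [Q] because [f \o g]
   is affine and is the identity on [Q]. *)
Lemma integrally_equivalent_affine_inverse (E1 E2 : finType)
    (P : {ffun E1 -> R} -> Prop) (Q : {ffun E2 -> R} -> Prop)
    (A : E2 -> E1 -> R) (c : E2 -> R) (B : E1 -> E2 -> R) (d : E1 -> R) :
  let f := affine_map A c in let g := affine_map B d in
  (forall e2 e1, A e2 e1 \is a Num.int) -> (forall e2, c e2 \is a Num.int) ->
  (forall e1 e2, B e1 e2 \is a Num.int) -> (forall e1, d e1 \is a Num.int) ->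
  cancel f g -> (forall y, Q y -> f (g y) = y) ->
  (forall x, P x -> Q (f x)) -> (forall y, Q y -> P (g y)) ->
  integrally_equivalent P Q.
Proof.
move=> f g A_int c_int B_int d_int fK gK PQ QP.
have f_inj x y : f x = f y -> x = y by move=> fxy; rewrite -(fK x) fxy fK.
have gK_hull y : aff_hull Q y -> f (g y) = y.
  move=> [k [q [l [Qq l_sum1 ->]]]].
  rewrite /f /g !affine_map_comb //; apply/ffunP => e; rewrite !ffunE.
  by apply: eq_bigr => i _; rewrite [affine_map A c _]gK.
exists A, c; split; split=> [x Px|x y _ _|y Qy]; try exact: f_inj.
- exact: PQ.
- by exists (g y); split; [apply: QP | apply: gK].
- case: Px => hull lat.
  by split; [exact: aff_hull_affine_map hull | exact: lattice_pt_affine_map].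
- case: Qy => hull lat; exists (g y); split; last exact: gK_hull.
  by split; [exact: aff_hull_affine_map hull | exact: lattice_pt_affine_map].
Qed.

End IntegralEquivalence.

Definition net_outflow (R : realType) (V E : finType) (src tgt : E -> V)
    (x : E -> R) (v : V) : R :=
  \sum_(e | src e == v) x e - \sum_(e | tgt e == v) x e.

Section NetOutflow.
Variables (R : realType) (V E : finType) (src tgt : E -> V).

Lemma flow_polytopeP (d : V -> R) (x : {ffun E -> R}) :
  flow_polytope src tgt d x <->
  (forall e, 0 <= x e) /\ forall v, net_outflow src tgt x v = d v.
Proof. exact: iff_refl. Qed.

Lemma eq_net_outflow (x y : E -> R) :
  x =1 y -> net_outflow src tgt x =1 net_outflow src tgt y.
Proof. by move=> xy v; rewrite /net_outflow !(eq_bigr _ (fun e _ => xy e)). Qed.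

Lemma net_outflowD (x y : E -> R) v :
  net_outflow src tgt (fun e => x e + y e) v =
  net_outflow src tgt x v + net_outflow src tgt y v.
Proof. by rewrite /net_outflow !big_split /=; lra. Qed.

Lemma net_outflowB (x y : E -> R) v :
  net_outflow src tgt (fun e => x e - y e) v =
  net_outflow src tgt x v - net_outflow src tgt y v.
Proof. by rewrite /net_outflow !sumrB; lra. Qed.

End NetOutflow.

Lemma neq_ord_max k (r : 'I_k.+1) : (r != ord_max) = (r < k)%N.
Proof.
rewrite -val_eqE /= neq_ltn orb_idr // => kr.
by have := ltn_ord r; simpl in *; lia.
Qed.

Section GridH.
Variables (R : realType) (n m : nat).
Local Notation VH := (VH n m).
Local Notation EH := (EH n m).
Local Notation srcH := (@srcH n m).
Local Notation tgtH := (@tgtH n m).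
Local Notation net_outflowH := (net_outflow srcH tgtH).
Implicit Types (u : VH) (e : EH) (y : EH -> R).

Definition horizontal e : bool := (srcH e).1 == (tgtH e).1.

Variant edgeH_spec e : bool -> Prop :=
  | EdgeRight of (tgtH e).1 = (srcH e).1 :> nat & (tgtH e).2 = (srcH e).2.+1 :> nat :
      edgeH_spec e true
  | EdgeDown of (tgtH e).1 = (srcH e).1.+1 :> nat & (tgtH e).2 = (srcH e).2 :> nat :
      edgeH_spec e false.

Lemma edgeHP e : edgeH_spec e (horizontal e).
Proof.
rewrite /horizontal; have : adjH (srcH e) (tgtH e) := valP e.
case/orP=> /andP[/eqP e1 /eqP e2].
  have -> : (srcH e).1 == (tgtH e).1 by apply/eqP/val_inj.
  by constructor.
have -> : ((srcH e).1 == (tgtH e).1) = false.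
  by apply/eqP => st; move: e1; rewrite st; lia.
by constructor.
Qed.

Lemma eq_vertexH u u' : (u == u') = (u.1 == u'.1 :> nat) && (u.2 == u'.2 :> nat).
Proof. by case: u u' => [i j] [i' j']; rewrite xpair_eqE. Qed.

Lemma horizontal_edge_inj e e' : horizontal e -> horizontal e' ->
  (srcH e).1 = (srcH e').1 -> (tgtH e).2 = (tgtH e').2 :> nat -> e = e'.
Proof.
case: edgeHP => // t1 t2 _; case: edgeHP => // t1' t2' _ s1 t2e.
apply: val_inj.
case: e e' t1 t2 t1' t2' s1 t2e => [[[i j] [k l]] _] [[[i' j'] [k' l']] _] /=.
move=> t1 t2 t1' t2' s1 t2e; subst i'.
by congr (_, _, (_, _)); apply: val_inj => /=; lia.
Qed.

Definition horizontal_into (i : 'I_n.+1) (t : nat) : pred EH :=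
  [pred e | [&& horizontal e, (srcH e).1 == i & (tgtH e).2 == t :> nat]].

Lemma card_horizontal_into i t : #|horizontal_into i t| = (0 < t <= m)%N.
Proof.
case: (boolP (0 < t <= m)%N) => t_range; last first.
  apply: eq_card0 => e; rewrite !inE; case: edgeHP => //= _ t2.
  apply/negbTE/andP => -[_ /eqP tE]; move: t_range; rewrite -tE t2 /=.
  by rewrite -ltnS -t2 ltn_ord.
have adj : adjH (i, inord t.-1 : 'I_m.+1) (i, inord t : 'I_m.+1).
  by rewrite /adjH /= eqxx !inordK //=; lia.
pose e0 : EH := exist _ ((i, inord t.-1), (i, inord t)) adj.
apply: (fintype.eq_card1 (x := e0)) => e; rewrite !inE.
apply/idP/eqP => [/and3P[h /eqP s1 /eqP t2]|->].
  apply: horizontal_edge_inj => //; rewrite ?s1 ?t2 /e0 /horizontal /srcH /tgtH /=.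
  - exact: eqxx.
  - by rewrite inordK //; lia.
by rewrite /horizontal /srcH /tgtH /= !eqxx inordK //=; lia.
Qed.

Definition hflow y i t : R := \sum_(e in horizontal_into i t) y e.

Lemma hflow_const y i t (r : R) :
  {in horizontal_into i t, forall e, y e = r} -> hflow y i t = r *+ (0 < t <= m)%N.
Proof. by move=> yr; rewrite /hflow (eq_bigr _ yr) sumr_const card_horizontal_into. Qed.

Lemma hflow_out_of_range y i t : ~~ (0 < t <= m)%N -> hflow y i t = 0.
Proof.
move=> t_out; rewrite /hflow big_pred0 //.
by apply: card0_eq; rewrite card_horizontal_into (negbTE t_out).
Qed.

Lemma hflow_edge y e : horizontal e -> hflow y (srcH e).1 (tgtH e).2 = y e.
Proof.
move=> he; rewrite /hflow (big_pred1 e) // => e'; rewrite !inE.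
apply/and3P/eqP => [[he' /eqP s1 /eqP t2]|->]; last by rewrite he !eqxx.
exact: horizontal_edge_inj.
Qed.

Definition vflow_out y u : R := \sum_(e | (srcH e == u) && ~~ horizontal e) y e.
Definition vflow_in y u : R := \sum_(e | (tgtH e == u) && ~~ horizontal e) y e.

Lemma net_outflowH_split y u :
  net_outflowH y u = hflow y u.1 u.2.+1 - hflow y u.1 u.2 + (vflow_out y u - vflow_in y u).
Proof.
rewrite /net_outflow (bigID horizontal) [X in _ - X](bigID horizontal) /=.
have -> : \sum_(e | (srcH e == u) && horizontal e) y e = hflow y u.1 u.2.+1.
  apply: eq_bigl => e; rewrite inE eq_vertexH.
  by case: (edgeHP e) => t1 t2; rewrite ?andbT ?andbF //= t2 eqSS.
have -> : \sum_(e | (tgtH e == u) && horizontal e) y e = hflow y u.1 u.2.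
  apply: eq_bigl => e; rewrite inE eq_vertexH.
  by case: (edgeHP e) => t1 t2; rewrite ?andbT ?andbF //= t1.
rewrite /vflow_out /vflow_in; lra.
Qed.

Definition into_last_row (t : nat) : pred EH :=
  [pred e | [&& ~~ horizontal e, (tgtH e).1 == ord_max & ((tgtH e).2 < t)%N]].

Lemma into_last_row_src t e : e \in into_last_row t -> (srcH e).1 != ord_max.
Proof.
rewrite !inE neq_ord_max => /and3P[+ /eqP t_max _].
case: (edgeHP e) => // t1 _ _.
move/(congr1 val): t_max; rewrite /= t1.
by move=> sn; rewrite -[X in (_ < X)%N]sn.
Qed.

Lemma last_row_horizontal e : (srcH e).1 = ord_max -> horizontal e.
Proof.
case: (edgeHP e) => // t1 _ s_max.
by have := ltn_ord (tgtH e).1; rewrite t1 s_max /= ltnn.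
Qed.

Definition last_row_inflow y t : R := \sum_(e in into_last_row t) y e.

Lemma last_row_inflow0 y : last_row_inflow y 0 = 0.
Proof. by rewrite /last_row_inflow big_pred0 // => e; rewrite !inE ltn0 !andbF. Qed.

Lemma vflow_out_last_row y c : vflow_out y (ord_max, c) = 0.
Proof.
rewrite /vflow_out big_pred0 // => e; rewrite eq_vertexH.
case: (edgeHP e) => t1 t2; rewrite ?andbF // andbT /=.
by apply/negbTE/andP => -[/eqP s1 _]; have := ltn_ord (tgtH e).1; simpl in *; lia.
Qed.

Lemma vflow_in_last_row y (c : 'I_m.+1) :
  vflow_in y (ord_max, c) = last_row_inflow y c.+1 - last_row_inflow y c.
Proof.
rewrite /last_row_inflow (bigID (fun e => (tgtH e).2 < c)%N) /=.
rewrite (eq_bigl (fun e => e \in into_last_row c)) => [|e]; last first.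
  by rewrite !inE -!andbA; do 2 congr andb; rewrite andb_idl // => /ltnW.
rewrite addrC addrK; apply: eq_bigl => e; rewrite !inE eq_vertexH.
case: (~~ horizontal e); rewrite ?andbF //= andbT -andbA.
by congr andb; rewrite ltnS -leqNgt -eqn_leq.
Qed.

Lemma last_row_balance y :
  (forall c : 'I_m.+1, (c < m)%N -> net_outflowH y (ord_max, c) = 0) ->
  forall t, (t <= m)%N -> hflow y ord_max t = last_row_inflow y t.
Proof.
move=> bal; elim=> [|t IH] tm.
  by rewrite hflow_out_of_range // last_row_inflow0.
have t_lt : (t < m.+1)%N by lia.
have := bal (inord t); rewrite inordK // => /(_ tm).
rewrite net_outflowH_split vflow_out_last_row vflow_in_last_row /= inordK // IH; last lia.
lra.
Qed.

Lemma last_row_inflow_total y :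
  (forall c : 'I_m.+1, (c < m)%N -> net_outflowH y (ord_max, c) = 0) ->
  last_row_inflow y m.+1 = - net_outflowH y (ord_max, ord_max).
Proof.
move=> bal; rewrite net_outflowH_split vflow_out_last_row vflow_in_last_row /=.
by rewrite hflow_out_of_range ?ltnn ?andbF // last_row_balance //; lra.
Qed.

Lemma hflow_first_row_ge y (beta : R) : (forall e, 0 <= y e) ->
  (forall c : 'I_m.+1, (0 < c)%N ->
     net_outflowH y (ord0, c) = if c == m :> nat then - beta else 0) ->
  forall t, (0 < t <= m)%N -> beta <= hflow y ord0 t.
Proof.
move=> y_ge0 bal.
have vin0 c : vflow_in y (ord0, c) = 0.
  rewrite /vflow_in big_pred0 // => e; rewrite eq_vertexH.
  by case: (edgeHP e) => t1 t2; rewrite ?andbF //= t1.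
have vout_ge0 c : 0 <= vflow_out y (ord0, c) by apply: sumr_ge0.
suff hk k : (k < m)%N -> beta <= hflow y ord0 (m - k).
  by move=> t /andP[t0 tm]; have := hk (m - t)%N; rewrite subKn //; apply; lia.
elim: k => [|k IH] km.
  have := bal ord_max km; rewrite net_outflowH_split vin0 /= eqxx subn0.
  rewrite hflow_out_of_range ?ltnn ?andbF //; have := vout_ge0 ord_max; lra.
have c0 : (0 < m - k.+1)%N by lia.
have := bal (inord (m - k.+1)); rewrite net_outflowH_split vin0 /= inordK; last lia.
move=> /(_ c0); have -> : (m - k.+1 == m)%N = false by lia.
have -> : (m - k.+1).+1 = (m - k)%N by lia.
have := vout_ge0 (inord (m - k.+1)); have := IH (ltnW km); lra.
Qed.

Definition first_row_shift (beta : R) e : R :=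
  if horizontal e && ((srcH e).1 == ord0) then beta else 0.

Lemma net_outflow_first_row_shift beta u :
  net_outflowH (first_row_shift beta) u =
  if u.1 == ord0 then beta *+ (u.2 < m)%N - beta *+ (0 < u.2)%N else 0.
Proof.
have shift_hflow t : hflow (first_row_shift beta) u.1 t =
    (if u.1 == ord0 then beta else 0) *+ (0 < t <= m)%N.
  by apply: hflow_const => e /and3P[he /eqP <- _]; rewrite /first_row_shift he.
rewrite net_outflowH_split !shift_hflow /vflow_out /vflow_in !big1 => [|e|e];
  try by case/andP=> _ /negbTE he; rewrite /first_row_shift he.
have u2m : (u.2 <= m)%N by rewrite -ltnS.
by rewrite subrr addr0 ltnS u2m andbT; case: eqP; rewrite ?mul0rn ?subrr.
Qed.

End GridH.

Section Contraction.
Variables (R : realType) (n m : nat).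
Local Notation VG := (VG n m).
Local Notation EG := (EG n m).
Local Notation VH := (VH n m).
Local Notation EH := (EH n m).
Local Notation srcG := (@srcG n m).
Local Notation tgtG := (@tgtG n m).
Local Notation srcH := (@srcH n m).
Local Notation tgtH := (@tgtH n m).

(* The sink [None] of G becomes the last row of H; a sink edge leaving
   column [c] is sent to the vertical edge entering the last row at [c]. *)
Definition lift_vertex (c : 'I_m.+1) (v : VG) : VH :=
  if v is Some (i, j) then (widen_ord (leqnSn n) i, j) else (ord_max, c).

Definition contract_vertex (u : VH) : VG :=
  if (insub (val u.1) : option 'I_n) is Some i then Some (i, u.2) else None.

Lemma lift_vertexK c : cancel (lift_vertex c) contract_vertex.
Proof.
case=> [[i j]|] /=; rewrite /contract_vertex /=; last by rewrite insubF ?ltnn.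
by rewrite valK.
Qed.

Lemma lift_vertex_last_row c v : ((lift_vertex c v).1 == ord_max) = (v == None).
Proof. by case: v => [[i j]|]; rewrite ?eqxx // -val_eqE /= ltn_eqF. Qed.

Lemma lift_vertex_eqSome c c' w v :
  (lift_vertex c w == lift_vertex c' (Some v)) = (w == Some v).
Proof.
by apply/eqP/eqP => [/(congr1 contract_vertex)|->]; rewrite ?lift_vertexK.
Qed.

Lemma lift_contract_vertex c u : (u.1 != ord_max) || (u.2 == c) ->
  lift_vertex c (contract_vertex u) = u.
Proof.
rewrite /contract_vertex; case: u => r j /=; case: insubP => [i _ iE|r_n] /=.
  by move=> _; congr (_, _); apply: val_inj.
have -> : r = ord_max by apply: val_inj; have := ltn_ord r; simpl in *; lia.
by rewrite eqxx => /eqP ->.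
Qed.

Definition lift_pair (p : VG * VG) : VH * VH :=
  (lift_vertex ord0 p.1, lift_vertex (lift_vertex ord0 p.1).2 p.2).

Lemma adjH_lift_pair p : p.1 != None ->
  adjH (lift_pair p).1 (lift_pair p).2 = adjG p.1 p.2.
Proof.
case: p => [[[i j]|] [[i' j']|]] //= _.
by rewrite /adjH /= eqxx andbT ltn_eqF.
Qed.

Lemma srcG_neq_None (e : EG) : srcG e != None.
Proof. by case: e => [[[[i j]|] v] adj]. Qed.

Definition liftE (e : EG) : EH :=
  Sub (lift_pair (val e)) (etrans (adjH_lift_pair (srcG_neq_None e)) (valP e)).

Definition contractE (e : EH) : option EG :=
  insub (contract_vertex (srcH e), contract_vertex (tgtH e)).

Lemma liftEK : pcancel liftE contractE.
Proof.
by move=> e; rewrite /contractE /srcH /tgtH /= !lift_vertexK -surjective_pairing valK.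
Qed.

Lemma liftE_inj : injective liftE.
Proof. exact: pcan_inj liftEK. Qed.

Lemma contractEK e : (srcH e).1 != ord_max -> omap liftE (contractE e) = Some e.
Proof.
move=> s_row; set p := (contract_vertex (srcH e), contract_vertex (tgtH e)).
have pK : lift_pair p = val e.
  rewrite /lift_pair /= lift_contract_vertex ?s_row // lift_contract_vertex.
    exact/esym/surjective_pairing.
  case: (edgeHP e) => t1 t2; last by apply/orP; right; apply/eqP/val_inj.
  by rewrite neq_ord_max t1 -neq_ord_max s_row.
have p1 : p.1 != None.
  rewrite -(lift_vertex_last_row ord0) (_ : lift_vertex _ _ = srcH e) //.
  by rewrite lift_contract_vertex ?s_row.
have adj : adjG p.1 p.2 by rewrite -adjH_lift_pair // pK (valP e).
rewrite /contractE -/p (insubT (fun q : VG * VG => adjG q.1 q.2) adj) /=.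
by congr Some; apply: val_inj.
Qed.

Lemma sum_liftE (Q : pred EH) (F : EH -> R) :
  (forall e, Q e -> (srcH e).1 != ord_max) ->
  \sum_(e1 | Q (liftE e1)) F (liftE e1) = \sum_(e | Q e) F e.
Proof.
move=> Q_row; rewrite (reindex_omap liftE contractE) => [|e /Q_row].
  by apply: eq_bigl => e1; rewrite liftEK eqxx andbT.
exact: contractEK.
Qed.

Lemma srcH_liftE e1 : srcH (liftE e1) = lift_vertex ord0 (srcG e1).
Proof. by []. Qed.

Lemma tgtH_liftE e1 : tgtH (liftE e1) = lift_vertex (srcH (liftE e1)).2 (tgtG e1).
Proof. by []. Qed.

Lemma liftE_row e1 : (srcH (liftE e1)).1 != ord_max.
Proof. by rewrite srcH_liftE lift_vertex_last_row srcG_neq_None. Qed.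

Lemma net_outflow_liftE (z : EH -> R) v :
  net_outflow srcG tgtG (z \o liftE) (Some v) =
  net_outflow srcH tgtH z (lift_vertex ord0 (Some v)).
Proof.
have lifted_row c : (lift_vertex c (Some v)).1 != ord_max by rewrite lift_vertex_last_row.
rewrite /net_outflow -(@sum_liftE (fun e => srcH e == _)) => [|e /eqP ->] //.
rewrite -(@sum_liftE (fun e => tgtH e == _)) => [|e /eqP tE]; last first.
  move: (lifted_row ord0); rewrite -tE !neq_ord_max.
  by case: (edgeHP e) => t1 t2; rewrite t1 // => /ltnW.
by congr (_ - _); apply: eq_bigl => e1; rewrite ?srcH_liftE ?tgtH_liftE lift_vertex_eqSome.
Qed.

Lemma net_outflow_liftE_sink (z : EH -> R) :
  net_outflow srcG tgtG (z \o liftE) None = - last_row_inflow z m.+1.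
Proof.
rewrite /net_outflow big_pred0 => [|e1]; last exact/negbTE/srcG_neq_None.
rewrite sub0r /last_row_inflow -(@sum_liftE (mem (into_last_row m.+1))) => [|e]; last first.
  exact: into_last_row_src.
congr (- _); apply: eq_bigl => e1; rewrite !inE tgtH_liftE lift_vertex_last_row ltn_ord andbT.
case: (tgtG e1 =P None) => [tN|_]; rewrite ?andbF // andbT.
by rewrite /horizontal tgtH_liftE tN (liftE_row e1).
Qed.

Definition push (x : {ffun EG -> R}) (e : EH) : R := \sum_(e1 | liftE e1 == e) x e1.

Lemma push_liftE x e1 : push x (liftE e1) = x e1.
Proof. by rewrite /push (big_pred1 e1) // => e1'; rewrite /= (inj_eq liftE_inj). Qed.

Lemma push_last_row x e : (srcH e).1 = ord_max -> push x e = 0.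
Proof.
move=> s_max; rewrite /push big_pred0 // => e1; apply/eqP => lift_e.
by move: (liftE_row e1); rewrite lift_e s_max eqxx.
Qed.

Lemma net_outflow_push (x : {ffun EG -> R}) v :
  net_outflow srcG tgtG x (Some v) =
  net_outflow srcH tgtH (push x) (lift_vertex ord0 (Some v)).
Proof.
by rewrite -net_outflow_liftE; apply: eq_net_outflow => e1; exact/esym/push_liftE.
Qed.

Lemma net_outflow_push_sink (x : {ffun EG -> R}) :
  net_outflow srcG tgtG x None = - last_row_inflow (push x) m.+1.
Proof.
by rewrite -net_outflow_liftE_sink; apply: eq_net_outflow => e1; exact/esym/push_liftE.
Qed.

Lemma push_ge0 (x : {ffun EG -> R}) e : (forall e1, 0 <= x e1) -> 0 <= push x e.
Proof. by move=> x_ge0; apply: sumr_ge0. Qed.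

Lemma lift_vertex_onto u : u.1 != ord_max -> exists v, u = lift_vertex ord0 (Some v).
Proof.
move=> u_row; case cE: (contract_vertex u) => [v|].
  by exists v; rewrite -cE lift_contract_vertex ?u_row.
have uE := @lift_contract_vertex ord0 u; rewrite u_row cE in uE.
by move: u_row; rewrite -(uE isT) eqxx.
Qed.

Lemma liftE_onto e : (srcH e).1 != ord_max -> exists e1, liftE e1 = e.
Proof. by move/contractEK; case: (contractE e) => // e1 [<-]; exists e1. Qed.

Lemma last_row_inflow_push x t :
  last_row_inflow (push x) t = \sum_(e1 | liftE e1 \in into_last_row t) x e1.
Proof.
rewrite /last_row_inflow -(@sum_liftE (mem (into_last_row t))) => [|e].
  by apply: eq_bigr => e1 _; rewrite push_liftE.
exact: into_last_row_src.
Qed.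

End Contraction.

Lemma sum_indicator (R : realType) (I : finType) (P : pred I) (F : I -> R) :
  \sum_i (P i)%:R * F i = \sum_(i | P i) F i.
Proof.
by rewrite [RHS]big_mkcond; apply: eq_bigr => i _; case: (P i); rewrite ?mul1r ?mul0r.
Qed.

Lemma entry_ord n (f : 'I_n -> nat) (i : 'I_n) : entry f i = f i.
Proof. by rewrite /entry valK. Qed.

Section FlowEquivalence.
Variables (R : realType) (n m : nat) (a b : 'I_n -> nat).
Hypotheses (n_gt0 : (0 < n)%N) (m_gt0 : (0 < m)%N).
Local Notation EG := (EG n m).
Local Notation EH := (EH n m).
Local Notation srcH := (@srcH n m).
Local Notation tgtH := (@tgtH n m).
Local Notation liftE := (@liftE n m).
Local Notation push := (@push R n m).
Local Notation FG := (@FG R n m a b).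
Local Notation FH := (@FH R n m (a_prime a b) (b_prime a b)).
Local Notation net_outflowH := (net_outflow srcH tgtH).

Definition shift_b1 (e : EH) : R := first_row_shift (entry b 0)%:R e.

Definition last_row_flow (z : EH -> R) (e : EH) : R :=
  if (srcH e).1 == ord_max then last_row_inflow z (tgtH e).2 else 0.

Definition lift_mx (e : EH) (e1 : EG) : R :=
  (liftE e1 == e)%:R + ((srcH e).1 == ord_max)%:R * (liftE e1 \in into_last_row (tgtH e).2)%:R.

Definition lift_flow := affine_map lift_mx (fun e => - shift_b1 e).

Definition contract_mx (e1 : EG) (e : EH) : R := (liftE e1 == e)%:R.

Definition contract_flow := affine_map contract_mx (fun e1 => shift_b1 (liftE e1)).

Lemma shift_b1_ge0 e : 0 <= shift_b1 e.
Proof. by rewrite /shift_b1 /first_row_shift; case: ifP. Qed.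

Lemma shift_b1_int e : shift_b1 e \is a Num.int.
Proof. by rewrite /shift_b1 /first_row_shift; case: ifP; rewrite ?rpred_nat ?rpred0. Qed.

Lemma shift_b1_vertical e : ~~ horizontal e -> shift_b1 e = 0.
Proof. by rewrite /shift_b1 /first_row_shift => /negbTE ->. Qed.

Lemma shift_b1_last_row e : (srcH e).1 = ord_max -> shift_b1 e = 0.
Proof.
by rewrite /shift_b1 /first_row_shift => ->; rewrite -val_eqE /= (gtn_eqF n_gt0) andbF.
Qed.

Lemma lift_flowE x e : lift_flow x e = push x e - shift_b1 e + last_row_flow (push x) e.
Proof.
rewrite ffunE; under eq_bigr do rewrite mulrDl -mulrA.
rewrite big_split /= sum_indicator -mulr_sumr sum_indicator -last_row_inflow_push.
rewrite -/(push x e) /last_row_flow.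
by case: ((srcH e).1 == ord_max); rewrite ?mul1r ?mul0r ?addr0; lra.
Qed.

Lemma last_row_flow_liftE z e1 : last_row_flow z (liftE e1) = 0.
Proof. by rewrite /last_row_flow (negbTE (liftE_row e1)). Qed.

Lemma lift_flow_liftE x e1 : lift_flow x (liftE e1) = x e1 - shift_b1 (liftE e1).
Proof. by rewrite lift_flowE push_liftE last_row_flow_liftE addr0. Qed.

Lemma contract_flowE y e1 : contract_flow y e1 = y (liftE e1) + shift_b1 (liftE e1).
Proof.
rewrite ffunE sum_indicator (big_pred1 (liftE e1)) => [|e]; first exact: addrC.
exact: eq_sym.
Qed.

Lemma lift_flowK : cancel lift_flow contract_flow.
Proof. by move=> x; apply/ffunP => e1; rewrite contract_flowE lift_flow_liftE subrK. Qed.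

Lemma push_contract_flow y e :
  (srcH e).1 != ord_max -> push (contract_flow y) e = y e + shift_b1 e.
Proof. by case/liftE_onto => e1 <-; rewrite push_liftE contract_flowE. Qed.

Lemma last_row_inflow_shift_b1 (y : EH -> R) t :
  last_row_inflow (fun e => y e + shift_b1 e) t = last_row_inflow y t.
Proof. by apply: eq_bigr => e /and3P[/shift_b1_vertical -> _ _]; rewrite addr0. Qed.

Lemma demandH_lift v :
  demandH R (a_prime a b) (b_prime a b) (lift_vertex ord0 (Some v)) =
  demandG R a b (Some v) - net_outflowH shift_b1 (lift_vertex ord0 (Some v)).
Proof.
case: v => i j; rewrite /shift_b1 net_outflow_first_row_shift.
rewrite /demandH /demandG /a_prime /b_prime /= ltn_ord !entry_ord -val_eqE /=.
have [i0|i0] := eqVneq (i : nat) 0%N; last by rewrite -!pmulrn subr0.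
have [-> ->] : entry a 0 = a i /\ entry b 0 = b i by rewrite -i0 !entry_ord.
rewrite intrB -!pmulrn.
have [j0|j0] := eqVneq (j : nat) 0%N; first by rewrite j0 m_gt0 /=; lra.
rewrite lt0n j0.
have [jm|jm] := eqVneq (j : nat) m; first by rewrite jm ltnn /=; lra.
by rewrite ltn_neqAle jm -ltnS ltn_ord /=; lra.
Qed.

Lemma demandH_last_row (c : 'I_m.+1) :
  demandH R (a_prime a b) (b_prime a b) (ord_max, c) =
  if c == m :> nat then - (\sum_i (a i)%:R - \sum_i (b i)%:R) else 0.
Proof.
rewrite /demandH /a_prime /b_prime /= (gtn_eqF n_gt0) ltnn.
have [->|c0] := eqVneq (c : nat) 0%N; first by rewrite eq_sym (gtn_eqF m_gt0).
case: eqP => // _; rewrite mulrz_sumr -sumrB; congr (- _).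
by apply: eq_bigr => i _; rewrite intrB -!pmulrn.
Qed.

Lemma last_row_inflow_push_total x :
  FG x -> last_row_inflow (push x) m.+1 = \sum_i (a i)%:R - \sum_i (b i)%:R.
Proof.
by case/flow_polytopeP=> _ x_bal; have := x_bal None; rewrite net_outflow_push_sink /=; lra.
Qed.

Lemma lift_flow_ge0 x : FG x -> forall e, 0 <= lift_flow x e.
Proof.
case/flow_polytopeP=> x_ge0 x_bal e; rewrite lift_flowE /last_row_flow.
case: (boolP ((srcH e).1 == ord_max)) => [/eqP s_max|s_row].
  rewrite push_last_row // shift_b1_last_row // subrr add0r.
  by apply: sumr_ge0 => e' _; apply: push_ge0.
rewrite addr0 subr_ge0 /shift_b1 /first_row_shift.
case: ifP => [/andP[he /eqP s0]|_]; last exact: push_ge0.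
rewrite -(hflow_edge _ he) s0; apply: hflow_first_row_ge => [e'|c c0|].
- exact: push_ge0.
- have -> : (ord0, c) = lift_vertex ord0 (Some (Ordinal n_gt0, c)).
    by congr (_, _); apply: val_inj.
  rewrite -net_outflow_push x_bal /demandG (gtn_eqF c0).
  by rewrite (entry_ord b (Ordinal n_gt0) : entry b 0 = _).
- have := ltn_ord (tgtH e).2.
  by case: (edgeHP e) he => // _ t2 _; rewrite ltnS t2 => ->.
Qed.

Lemma net_outflow_lift_flow_last_row x (c : 'I_m.+1) : FG x ->
  net_outflowH (lift_flow x) (ord_max, c) = demandH R (a_prime a b) (b_prime a b) (ord_max, c).
Proof.
move/last_row_inflow_push_total=> push_total.
have inflowE t : last_row_inflow (lift_flow x) t = last_row_inflow (push x) t.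
  apply: eq_bigr => e e_in.
  rewrite lift_flowE /last_row_flow (negbTE (into_last_row_src e_in)).
  by move: e_in; rewrite inE => /and3P[/shift_b1_vertical -> _ _]; rewrite subr0 addr0.
have hflowE t :
    hflow (lift_flow x) ord_max t = last_row_inflow (push x) t *+ (0 < t <= m)%N.
  apply: hflow_const => e /and3P[_ /eqP s_max /eqP t2].
  rewrite lift_flowE push_last_row // shift_b1_last_row // /last_row_flow.
  by rewrite s_max eqxx t2 subrr add0r.
rewrite net_outflowH_split /= vflow_out_last_row vflow_in_last_row.
rewrite !hflowE !inflowE demandH_last_row.
have [cm|cm] := eqVneq (c : nat) m.
  by rewrite cm ltnn leqnn m_gt0 /= -push_total mulr0n mulr1n; lra.
have c_le : (c <= m)%N by rewrite -ltnS ltn_ord.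
have -> : (c < m)%N by rewrite ltn_neqAle cm c_le.
rewrite c_le andbT mulr1n.
have [c0|c0] := eqVneq (c : nat) 0%N; first by rewrite c0 last_row_inflow0 /=; lra.
by rewrite lt0n c0 /=; lra.
Qed.

Lemma lift_flow_feasible x : FG x -> FH (lift_flow x).
Proof.
move=> Gx; apply/flow_polytopeP; split=> [|u]; first exact: lift_flow_ge0.
case: (boolP (u.1 == ord_max)) => [/eqP u_max|]; last first.
  case/flow_polytopeP: Gx => _ x_bal.
  case/lift_vertex_onto=> v ->; rewrite demandH_lift -net_outflow_liftE -(x_bal (Some v)).
  rewrite -net_outflow_liftE -net_outflowB; apply: eq_net_outflow => e1.
  exact: lift_flow_liftE.
by case: u u_max => r c /= ->; apply: net_outflow_lift_flow_last_row.
Qed.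

Lemma contract_flow_feasible y : FH y -> FG (contract_flow y).
Proof.
case/flow_polytopeP=> y_ge0 y_bal; apply/flow_polytopeP.
have last_bal (c : 'I_m.+1) : (c < m)%N -> net_outflowH y (ord_max, c) = 0.
  by move=> cm; rewrite y_bal demandH_last_row ltn_eqF.
have contractE : contract_flow y =1 (fun e => y e + shift_b1 e) \o liftE.
  exact: contract_flowE.
split=> [e1|v]; first by rewrite contract_flowE addr_ge0 ?shift_b1_ge0.
rewrite (eq_net_outflow _ _ contractE); case: v => [v|].
  by rewrite net_outflow_liftE net_outflowD y_bal demandH_lift subrK.
rewrite net_outflow_liftE_sink last_row_inflow_shift_b1 last_row_inflow_total //.
by rewrite y_bal demandH_last_row eqxx /demandG; lra.
Qed.

Lemma contract_flowK y : FH y -> lift_flow (contract_flow y) = y.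
Proof.
case/flow_polytopeP=> y_ge0 y_bal; apply/ffunP => e; rewrite lift_flowE /last_row_flow.
case: (boolP ((srcH e).1 == ord_max)) => [/eqP s_max|s_row]; last first.
  by rewrite push_contract_flow // addr0 addrK.
rewrite push_last_row // shift_b1_last_row // subrr add0r.
have he := last_row_horizontal s_max.
rewrite -(hflow_edge _ he) s_max last_row_balance => [|c cm|]; last first.
- by rewrite -ltnS ltn_ord.
- by rewrite y_bal demandH_last_row ltn_eqF.
apply: eq_bigr => e' e'_in; rewrite push_contract_flow ?(into_last_row_src e'_in) //.
by move: e'_in; rewrite inE => /and3P[/shift_b1_vertical -> _ _]; rewrite addr0.
Qed.

End FlowEquivalence.

Theorem proposition7p6 (R : realType) (n m : nat) (hn : (0 < n)%N) (hm : (0 < m)%N)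
  (a b : 'I_n -> nat) :
  integrally_equivalent (@FG R n m a b) (@FH R n m (a_prime a b) (b_prime a b)).
Proof.
apply: (@integrally_equivalent_affine_inverse R _ _ _ _
  (@lift_mx R n m) (fun e => - @shift_b1 R n m b e)
  (@contract_mx R n m) (fun e1 => @shift_b1 R n m b (liftE e1))).
- by move=> e e1; rewrite rpredD ?rpredM ?rpred_nat.
- by move=> e; rewrite rpredN shift_b1_int.
- by move=> e1 e; rewrite rpred_nat.
- by move=> e1; rewrite shift_b1_int.
- exact: lift_flowK.
- exact: contract_flowK.
- exact: lift_flow_feasible.
- exact: contract_flow_feasible.
Qed.
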